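(* Let $p$ be a prime, $m,n\ge0$ integers and $a,b,c,d\ge0$ integers (assumed positive if $p=2$). (1) If $p^m\frac{p^a+1}{p^b+1}=p^n\frac{p^c+1}{p^d+1}\in\mathbb Z_{>0}$, then $m=n$ and either ($a=b$ and $c=d$) or ($a=c$ and $b=d$). (2) If $p^m\frac{p^a-1}{p^b+1}=p^n\frac{p^c-1}{p^d+1}\in\mathbb Z_{>0}$, then $m=n$, $a=c$ and $b=d$. (3) If $p^m\frac{p^a+1}{p^b+1}=p^n\frac{p^c-1}{p^d+1}\in\mathbb Z_{>0}$, then $m=n$ and either $p=2$ and ($a=b$, $c=2$, $d=1$, or $(a,b,c,d)=(3,1,4,2)$), or $p=3$ and ($a=b$, $c=1$, $d=0$, or $(a,b,c,d)=(1,0,2,1)$). (4) If $p^m(p^a+1)=p^n\frac{p^c+1}{p^d+1}\in\mathbb Z_{>0}$, then $m=n$ and either $p=3$ and $(a,c,d)=(0,1,0)$, or $p=2$ and $(a,c,d)=(1,3,1)$. (5) If $p^m(p^a+1)=p^n\frac{p^c-1}{p^d+1}\in\mathbb Z_{>0}$, then $m=n$ and either $p=5$ and $(a,c,d)=(0,1,0)$, or $p=3$ and $(a,c,d)\in\{(0,2,1),(1,2,0)\}$, or $p=2$ and $(a,c,d)\in\{(1,4,2),(2,4,1)\}$. *)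

From mathcomp Require Import all_boot all_algebra.
Set Implicit Arguments. Unset Strict Implicit. Unset Printing Implicit Defensive.
Import GRing.Theory Num.Theory.
Local Open Scope ring_scope.

Definition posint (x : rat) : Prop := exists k : nat, (0 < k)%N /\ x = k%:R.

Definition exps_ok (p : nat) (l : seq nat) : Prop :=
  p = 2%N -> all (fun e => (0 < e)%N) l.

Definition pw (p e : nat) : rat := (p%:R) ^+ e.

(* Clearing denominators turns each identity into p^m U = p^n V in the naturals, where U
   and V are products of numbers p^e + 1 and p^e - 1; under the standing hypothesis none of
   these is divisible by p, so comparing p-adic valuations gives m = n and U = V.  The
   remaining exponential equations in powers of p are solved by splitting off the smallest
   power of p and reducing modulo p: a number of the form p^c = X + r with p | X forces
   p | r, which pins p down to 2, 3 or 5 in the exceptional cases, and a further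
   comparison of valuations (or, for p = 2, a reduction modulo 4) finishes each case. *)

From mathcomp Require Import all_boot all_algebra.
From mathcomp Require Import zify ring.
Import GRing.Theory Num.Theory.
Set Implicit Arguments. Unset Strict Implicit. Unset Printing Implicit Defensive.

Lemma pdvd_expn {p e : nat} : 0 < e -> p %| p ^ e.
Proof. by move=> e_gt0; apply: dvdn_exp. Qed.

Section ExpnGt1.
Variable p : nat.
Hypothesis p_gt1 : 1 < p.

Lemma pexpn_gt0 e : 0 < p ^ e.
Proof. by rewrite expn_gt0 ltnW. Qed.

Lemma ndvd_add1 x : p %| x -> ~~ (p %| x + 1).
Proof. by move=> px; rewrite dvdn_addr // dvdn1 gtn_eqF. Qed.

Lemma ndvd_expn_sub1 e : 0 < e -> ~~ (p %| p ^ e - 1).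
Proof.
move=> e_gt0; apply/negP => /ndvd_add1/negP; apply.
by rewrite subnK ?pexpn_gt0 ?pdvd_expn.
Qed.

Lemma expn_sub1_gt0 e : (0 < p ^ e - 1) = (0 < e).
Proof. by rewrite subn_gt0 -{1}(expn0 p) ltn_exp2l. Qed.

Lemma pdvd_expn_addr c x r : 0 < c -> p ^ c = x + r -> p %| x -> p %| r.
Proof. by move=> c_gt0 E px; rewrite -(dvdn_addr _ px) -E pdvd_expn. Qed.

Lemma pfactor_mul_inj x y u v :
  p ^ x * u = p ^ y * v -> ~~ (p %| u) -> ~~ (p %| v) -> x = y /\ u = v.
Proof.
wlog le_xy : x y u v / x <= y => [hwlog E pu pv|].
  case: (leqP x y) => [le_xy | /ltnW le_yx]; first exact: hwlog.
  by have [-> ->] := hwlog _ _ _ _ le_yx (esym E) pv pu.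
rewrite -(subnKC le_xy); move: (y - x) => k.
rewrite expnD -mulnA => /eqP; rewrite eqn_pmul2l ?pexpn_gt0 // => /eqP ->.
by case: k => [|k]; [rewrite addn0 mul1n | rewrite dvdn_mulr // pdvd_expn].
Qed.

Lemma pfactor_mul_eq_expn x y u :
  p ^ x * u = p ^ y -> ~~ (p %| u) -> x = y /\ u = 1.
Proof.
by move=> E pu; apply: pfactor_mul_inj pu _; rewrite ?muln1 // dvdn1 gtn_eqF.
Qed.

Lemma mul_expn_add1_min_neq x y z w : x <= y -> x < z -> x < w ->
  (p ^ x + 1) * (p ^ y + 1) != (p ^ z + 1) * (p ^ w + 1).
Proof.
move=> le_xy lt_xz lt_xw.
have [lt_xy | le_yx] := ltnP x y; last first.
  have -> : y = x by apply/eqP; rewrite eqn_leq le_yx.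
  by rewrite neq_ltn ltn_mul // ltn_add2r ltn_exp2l.
have pdvd e : x < e -> p %| p ^ (e - x) by rewrite -subn_gt0; apply: pdvd_expn.
rewrite -(subnKC (ltnW lt_xy)) -(subnKC (ltnW lt_xz)) -(subnKC (ltnW lt_xw)) !expnD.
move: (pexpn_gt0 x) (pdvd _ lt_xy) (pdvd _ lt_xz) (pdvd _ lt_xw).
move: (p ^ x) (p ^ (y - x)) (p ^ (z - x)) (p ^ (w - x)) => u X Y Z u_gt0 pX pY pZ.
apply/eqP => E.
(* Subtracting 1 and dividing by u leaves u X + X + 1 = u Y Z + Y + Z, false mod p. *)
have : u * (u * X + X + 1) + 1 = u * (u * Y * Z + Y + Z) + 1.
  by transitivity ((u + 1) * (u * X + 1)); [ring | rewrite E; ring].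
move/addIn/eqP; rewrite eqn_pmul2l // => /eqP E'.
have : p %| u * Y * Z + Y + Z by rewrite !dvdn_add // dvdn_mull.
by rewrite -E' (negPf (ndvd_add1 _)) // dvdn_add // dvdn_mull.
Qed.

Lemma mul_expn_add1_share x y z w :
  (p ^ x + 1) * (p ^ y + 1) = (p ^ z + 1) * (p ^ w + 1) ->
  x <> z -> x <> w -> y <> z -> y <> w -> False.
Proof.
wlog le_xy : x y / x <= y => [hwlog E *|].
  case: (leqP x y) => [le_xy | /ltnW le_yx]; first exact: hwlog E _ _ _ _.
  by apply: (hwlog y x) => //; rewrite mulnC.
wlog le_zw : z w / z <= w => [hwlog E *|].
  case: (leqP z w) => [le_zw | /ltnW le_wz]; first exact: hwlog E _ _ _ _.
  by apply: (hwlog w z) => //; rewrite [RHS]mulnC.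
wlog le_xz : x y z w le_xy le_zw / x <= z => [hwlog E *|].
  case: (leqP x z) => [le_xz | /ltnW le_zx]; first exact: hwlog E _ _ _ _.
  by apply: (hwlog z w x y) => //; lia.
move=> E ne_xz ne_xw _ _.
have lt_xz : x < z by lia.
have lt_xw : x < w by lia.
by move: (mul_expn_add1_min_neq le_xy lt_xz lt_xw); rewrite E eqxx.
Qed.

Lemma mul_expn_add1_inj a b c d :
  (p ^ a + 1) * (p ^ d + 1) = (p ^ c + 1) * (p ^ b + 1) ->
  (a = b /\ c = d) \/ (a = c /\ b = d).
Proof.
move=> E.
have cancel x y z : (p ^ x + 1) * (p ^ y + 1) = (p ^ x + 1) * (p ^ z + 1) -> y = z.
  by move/eqP; rewrite eqn_pmul2l ?eqn_add2r ?addn1 // => /eqP/expnI->.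
case: (eqVneq a b) E => [<- E | ne_ab E]; first by left; split=> //; apply: (@cancel a); rewrite E mulnC.
case: (eqVneq a c) E => [<- E | ne_ac E]; first by right; split=> //; apply: (@cancel a); rewrite E.
case: (eqVneq d b) E => [<- E | ne_db E]; first by right; split=> //; apply: (@cancel d); rewrite mulnC E mulnC.
case: (eqVneq d c) E => [<- E | ne_dc E]; first by left; split=> //; apply: (@cancel d); rewrite mulnC E.
move: ne_ab ne_ac ne_db ne_dc => /eqP ? /eqP ? /eqP ? /eqP ?.
by exfalso; apply: (mul_expn_add1_share E).
Qed.

End ExpnGt1.

Lemma gt0_of_expn_gt1 p c : 1 < p ^ c -> 0 < c.
Proof. by case: c => //; rewrite expn0. Qed.

Section PowersOfThree.
Let three_gt1 : 1 < 3 := isT.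

Lemma add1_quot_sub1_3_d0 a b c q : 0 < b -> 2 <= q ->
  q * (3 ^ b + 1) = 3 ^ a + 1 -> q * 2 + 1 = 3 ^ c -> False.
Proof.
move=> b_gt0 q_ge2 Ea Ec.
have lt_ba : b < a by rewrite -(ltn_exp2l _ _ three_gt1); nia.
case: b b_gt0 lt_ba Ea => // b _ lt_ba Ea.
case: a lt_ba Ea => // a lt_ba Ea.
have E : 3 ^ c * (3 ^ b.+1 + 1) = 3 ^ 1 * (2 * 3 ^ a + 3 ^ b + 1).
  by rewrite -Ec; move: Ea; rewrite !expnS; lia.
have odd_part : ~~ (3 %| 2 * 3 ^ a + 3 ^ b + 1).
  case: b lt_ba {Ea E} => [|b] lt_ba.
    by case: a lt_ba => // a _; rewrite expn0 -addnA dvdn_addr ?dvdn_mull ?pdvd_expn.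
  apply: ndvd_add1 => //; apply: dvdn_add; [apply: dvdn_mull|]; apply: pdvd_expn => //.
  lia.
have [c1 _] := pfactor_mul_inj three_gt1 E (ndvd_add1 three_gt1 (pdvd_expn (ltn0Sn _))) odd_part.
by move: Ec; rewrite c1; lia.
Qed.

End PowersOfThree.

Section PowersOfTwo.
Let two_gt1 : 1 < 2 := isT.

Lemma add1_quot_sub1_2_b1 a c d q : 0 < d -> 2 <= q ->
  q * 3 = 2 ^ a + 1 -> q * (2 ^ d + 1) + 1 = 2 ^ c -> (a, c, d) = (3, 4, 2).
Proof.
move=> d_gt0 q_ge2 Ea Ec.
have E : 3 * 2 ^ c = (2 ^ a + 1) * (2 ^ d + 1) + 3 by rewrite -Ec -Ea; ring.
case: a Ea E => [|[|[|a]]] Ea E; try lia.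
case: d d_gt0 Ec E => [|[|[|d]]] // _ Ec E.
- have E' : 2 ^ 1 * (2 ^ a.+2 + 1) = 2 ^ c by move: E; rewrite !expnS; lia.
  have [_] := pfactor_mul_eq_expn two_gt1 E' (ndvd_add1 two_gt1 (pdvd_expn (ltn0Sn _))).
  by have := pexpn_gt0 two_gt1 a.+2; lia.
- case: a Ea E => [|a] Ea E.
    by have -> : c = 4 by apply: (expnI two_gt1); move: E => /=; lia.
  have E' : 2 ^ 3 * (2 ^ a * 10 + 1) = 2 ^ c * 3 by move: E; rewrite !expnS; lia.
  have [_] := pfactor_mul_inj two_gt1 E' (ndvd_add1 two_gt1 (dvdn_mull _ (isT : 2 %| 10))) isT.
  by have := pexpn_gt0 two_gt1 a; lia.
- have E' : 2 ^ 2 * (16 * 2 ^ a * 2 ^ d + 2 * 2 ^ a + 2 * 2 ^ d + 1) = 2 ^ c * 3.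
    by rewrite [2 ^ c * 3]mulnC E !expnS; ring.
  have even : 2 %| 16 * 2 ^ a * 2 ^ d + 2 * 2 ^ a + 2 * 2 ^ d.
    by apply/dvdnP; exists (8 * 2 ^ a * 2 ^ d + 2 ^ a + 2 ^ d); ring.
  have [_] := pfactor_mul_inj two_gt1 E' (ndvd_add1 two_gt1 even) isT.
  by have := pexpn_gt0 two_gt1 a; have := pexpn_gt0 two_gt1 d; lia.
Qed.

Lemma add1_quot_sub1_2_b2 a b c d q : 1 < b -> 0 < d -> 2 <= q ->
  q * (2 ^ b + 1) = 2 ^ a + 1 -> q * (2 ^ d + 1) + 1 = 2 ^ c -> False.
Proof.
move=> b_gt1 d_gt0 q_ge2 Ea Ec.
have lt_ba : b < a by rewrite -(ltn_exp2l _ _ two_gt1); nia.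
have c_gt1 : 1 < c by rewrite -(ltn_exp2l _ _ two_gt1) -Ec; nia.
case: b b_gt1 lt_ba Ea => [|[|b]] // _ lt_ba Ea.
case: a lt_ba Ea => [|[|a]] // lt_ba Ea.
case: d d_gt0 Ec => [|[|d]] // _ Ec; last first.
  (* q = 1 mod 4 by the first equation, q = 3 mod 4 by the second. *)
  case: c c_gt1 Ec => [|[|c]] // _ Ec.
  by move: Ea Ec; rewrite !(expnS 2 b.+1) !(expnS 2 b) !(expnS 2 a.+1) !(expnS 2 a)
    !(expnS 2 d.+1) !(expnS 2 d) !(expnS 2 c.+1) !(expnS 2 c); lia.
have E : 2 ^ c * (2 ^ b.+2 + 1) = 3 * (2 ^ a.+2 + 1) + 2 ^ b.+2 + 1 by rewrite -Ec -Ea; ring.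
case: b lt_ba Ea E => [|b] lt_ba Ea E.
  case: a lt_ba Ea E => [|[|a]] // lt_ba Ea E.
    have E' : 2 ^ c * 5 = 2 ^ 5 * 1 by move: E => /=; lia.
    by case: (pfactor_mul_inj two_gt1 E' isT isT).
  have E' : 2 ^ c * 5 = 2 ^ 3 * (2 ^ a * 6 + 1) by move: E; rewrite !expnS; lia.
  have [_] := pfactor_mul_inj two_gt1 E' isT (ndvd_add1 two_gt1 (dvdn_mull _ (isT : 2 %| 6))).
  by have := pexpn_gt0 two_gt1 a; lia.
case: a lt_ba Ea E => [|a] // lt_ba Ea E.
have E' : 2 ^ c * (2 ^ b.+3 + 1) = 2 ^ 2 * (2 ^ a * 6 + 2 ^ b * 2 + 1).
  by rewrite E !expnS; ring.
have even : 2 %| 2 ^ a * 6 + 2 ^ b * 2 by rewrite dvdn_add // dvdn_mull.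
have [c2 E''] := pfactor_mul_inj two_gt1 E' (ndvd_add1 two_gt1 (pdvd_expn (ltn0Sn _))) (ndvd_add1 two_gt1 even).
have /(expnI two_gt1) eq_ab : 2 ^ a = 2 ^ b by move: E''; rewrite !expnS; lia.
lia.
Qed.

End PowersOfTwo.

Section PrimeExpn.
Variable p : nat.
Hypothesis p_prime : prime p.
Let p_gt1 : 1 < p := prime_gt1 p_prime.

Lemma pdvd_primeE q : prime q -> p %| q -> p = q.
Proof. by move=> q_prime; rewrite dvdn_prime2 // => /eqP. Qed.

Lemma ndvd_expn_add1 e : (p = 2 -> 0 < e) -> ~~ (p %| p ^ e + 1).
Proof.
case: e => [|e] e_ok; last by rewrite ndvd_add1 // pdvd_expn.
by apply/negP; rewrite expn0 => /(pdvd_primeE (isT : prime 2))/e_ok.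
Qed.

Lemma exps_ok_ndvd l : exps_ok p l -> all (fun e => ~~ (p %| p ^ e + 1)) l.
Proof. by move=> ok; apply/allP => e e_l; apply: ndvd_expn_add1 => /ok/allP; apply. Qed.

Lemma ndvd_mul x y : ~~ (p %| x) -> ~~ (p %| y) -> ~~ (p %| x * y).
Proof. by move=> px py; rewrite Euclid_dvdM // negb_or px py. Qed.

Lemma sub1_quot_add1_inj q a b c d : 0 < a ->
  q * (p ^ b + 1) + 1 = p ^ a -> q * (p ^ d + 1) + 1 = p ^ c -> a = c /\ b = d.
Proof.
move=> a_gt0 Ea Ec.
have q_gt0 : 0 < q.
  by case: q Ea {Ec} => // Ea; have := ltn_exp2l 0 a p_gt1; rewrite -Ea a_gt0.
have c_gt0 : 0 < c by apply: (gt0_of_expn_gt1 (p := p)); rewrite -Ec; nia.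
wlog le_bd : a b c d a_gt0 c_gt0 Ea Ec / b <= d => [hwlog|].
  case: (leqP b d) => [le_bd | /ltnW le_db]; first exact: hwlog.
  by have [-> ->] := hwlog c d a b c_gt0 a_gt0 Ec Ea le_db.
case: (ltnP b d) => [lt_bd | le_db]; last first.
  have eq_db : d = b by apply/eqP; rewrite eqn_leq le_db.
  by subst d; split=> //; apply: (expnI p_gt1); rewrite -Ea -Ec.
have lt_ac : a < c.
  by rewrite -(ltn_exp2l _ _ p_gt1) -Ea -Ec ltn_add2r ltn_pmul2l // ltn_add2r ltn_exp2l.
have pq : ~~ (p %| q).
  apply/negP => /(dvdn_mulr (p ^ b + 1))/(pdvd_expn_addr a_gt0 (esym Ea)).
  by rewrite dvdn1 gtn_eqF.
(* Subtracting the first equation from the second. *)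
have E : p ^ b * (q * (p ^ (d - b) - 1)) = p ^ a * (p ^ (c - a) - 1).
  move: Ec; rewrite -(subnKC (ltnW lt_bd)) -(subnKC (ltnW lt_ac)) !expnD !addKn -Ea.
  case: (p ^ (c - a)) (pexpn_gt0 p_gt1 (c - a)) => // T _.
  case: (p ^ (d - b)) (pexpn_gt0 p_gt1 (d - b)) => // Y _.
  by rewrite !subn1 /=; lia.
have pD : ~~ (p %| p ^ (d - b) - 1) by rewrite ndvd_expn_sub1 // subn_gt0.
have pC : ~~ (p %| p ^ (c - a) - 1) by rewrite ndvd_expn_sub1 // subn_gt0.
have [eq_ba _] := pfactor_mul_inj p_gt1 E (ndvd_mul pq pD) pC.
by move: Ea; rewrite eq_ba; nia.
Qed.

Lemma expn_add2_eq_expn c d : (p = 2 -> 0 < d) -> p ^ d + 2 = p ^ c ->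
  (p = 3 /\ d = 0 /\ c = 1) \/ (p = 2 /\ d = 1 /\ c = 2).
Proof.
move=> d_ok E.
have c_gt0 : 0 < c by apply: (gt0_of_expn_gt1 (p := p)); rewrite -E; lia.
have pc : p %| p ^ c := pdvd_expn c_gt0.
case: d d_ok E pc => [_ | d _] E pc.
  move: pc; rewrite -E expn0 => /(pdvd_primeE (isT : prime 3)) p3; subst p.
  by left; do 2!split=> //; apply: (expnI p_gt1); rewrite -E.
have p2 : p = 2.
  exact: pdvd_primeE (isT : prime 2) (pdvd_expn_addr c_gt0 (esym E) (pdvd_expn _)).
subst p; right; split=> //.
case: d E => [|d] E; first by split=> //; apply: (expnI p_gt1); rewrite -E.
have E' : 2 ^ 1 * (2 ^ d.+1 + 1) = 2 ^ c by rewrite -E (expnS 2 d.+1); ring.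
have [_] := pfactor_mul_eq_expn p_gt1 E' (ndvd_add1 p_gt1 (pdvd_expn (ltn0Sn _))).
by have := pexpn_gt0 p_gt1 d.+1; lia.
Qed.

Lemma add1_quot_sub1_b0 a c d q : p <> 2 -> 2 <= q ->
  q * 2 = p ^ a + 1 -> q * (p ^ d + 1) + 1 = p ^ c -> p = 3 /\ (a, c, d) = (1, 2, 1).
Proof.
move=> p_neq2 q_ge2 Ea Ec.
case: a Ea => [|a] Ea; first by rewrite expn0 in Ea; lia.
have c_gt0 : 0 < c by apply: (gt0_of_expn_gt1 (p := p)); rewrite -Ec; nia.
case: d Ec => [|d] Ec.
  have Ec' : p ^ c = p ^ a.+1 + 2 by rewrite -Ec expn0; lia.
  by case: p_neq2; apply: pdvd_primeE (isT : prime 2) (pdvd_expn_addr c_gt0 Ec' (pdvd_expn _)).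
have Ec' : p ^ c = q * p ^ d.+1 + (q + 1) by rewrite -Ec; ring.
have pq1 := pdvd_expn_addr c_gt0 Ec' (dvdn_mull _ (pdvd_expn (ltn0Sn d))).
have : p %| p ^ a.+1 + 3 by rewrite (_ : _ + 3 = 2 * (q + 1)) ?dvdn_mull //; lia.
rewrite dvdn_addr ?pdvd_expn // => /(pdvd_primeE (isT : prime 3)) p3; subst p.
have E : 2 * 3 ^ c = (3 ^ a.+1 + 1) * (3 ^ d.+1 + 1) + 2 by rewrite -Ec -Ea; ring.
case: a Ea E => [|a] Ea E; case: d Ec E {Ec' pq1} => [|d] Ec E.
- by have -> : c = 2 by apply: (expnI p_gt1); move: E => /=; lia.
- have E' : 3 ^ 1 * (3 ^ d.+1 * 2 + 1) = 3 ^ c by move: E; rewrite !expnS /=; lia.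
  have [_] := pfactor_mul_eq_expn p_gt1 E' (ndvd_add1 p_gt1 (dvdn_mulr _ (pdvd_expn (ltn0Sn _)))).
  by have := pexpn_gt0 p_gt1 d.+1; lia.
- have E' : 3 ^ 1 * (3 ^ a.+1 * 2 + 1) = 3 ^ c by move: E; rewrite !expnS /=; lia.
  have [_] := pfactor_mul_eq_expn p_gt1 E' (ndvd_add1 p_gt1 (dvdn_mulr _ (pdvd_expn (ltn0Sn _)))).
  by have := pexpn_gt0 p_gt1 a.+1; lia.
- have E' : 3 ^ 1 * (3 * 3 ^ a.+1 * 3 ^ d.+1 + 3 ^ a.+1 + 3 ^ d.+1 + 1) = 3 ^ c * 2.
    by rewrite [3 ^ c * 2]mulnC E !expnS; ring.
  have div3 : 3 %| 3 * 3 ^ a.+1 * 3 ^ d.+1 + 3 ^ a.+1 + 3 ^ d.+1.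
    by apply/dvdnP; exists (3 ^ a.+1 * 3 ^ d.+1 + 3 ^ a + 3 ^ d); rewrite !expnS; ring.
  have [_] := pfactor_mul_inj p_gt1 E' (ndvd_add1 p_gt1 div3) isT.
  by have := pexpn_gt0 p_gt1 a.+1; have := pexpn_gt0 p_gt1 d.+1; lia.
Qed.

Lemma add1_quot_sub1 a b c d q :
  (p = 2 -> [/\ 0 < a, 0 < b, 0 < c & 0 < d]) ->
  q * (p ^ b + 1) = p ^ a + 1 -> q * (p ^ d + 1) + 1 = p ^ c ->
  (p = 2 /\ ((a = b /\ c = 2 /\ d = 1) \/ (a, b, c, d) = (3, 1, 4, 2))) \/
  (p = 3 /\ ((a = b /\ c = 1 /\ d = 0) \/ (a, b, c, d) = (1, 0, 2, 1))).
Proof.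
move=> ok Ea Ec.
case: q Ea Ec => [|[|q]] Ea Ec; first by rewrite mul0n addn1 in Ea.
  rewrite !mul1n in Ea Ec.
  have eq_ab : a = b by apply: (expnI p_gt1); lia.
  have d_ok : p = 2 -> 0 < d by case/ok.
  have Ec' : p ^ d + 2 = p ^ c by rewrite -Ec -addnA.
  have [[-> [-> ->]] | [-> [-> ->]]] := expn_add2_eq_expn d_ok Ec'; [right | left]; by split; [|left].
have q_ge2 : 2 <= q.+2 by [].
have c_gt0 : 0 < c by apply: (gt0_of_expn_gt1 (p := p)); rewrite -Ec; lia.
case: b ok Ea => [|b] ok Ea.
  have p_neq2 : p <> 2 by case/ok.
  rewrite expn0 in Ea.
  have [p3 [-> -> ->]] := add1_quot_sub1_b0 p_neq2 q_ge2 Ea Ec.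
  by right; split=> //; right.
case: a ok Ea => [|a] ok Ea; first by move: Ea; rewrite expn0; nia.
have pa := pdvd_expn (p := p) (ltn0Sn a); have pb := pdvd_expn (p := p) (ltn0Sn b).
case: d ok Ec => [|d] ok Ec.
  (* p divides 2q + 1, hence also 2 q (p^b + 1) + 1 = 2 p^a + 3, and so p = 3. *)
  have pq : p %| q.+2 * 2 + 1 by rewrite expn0 in Ec; rewrite Ec pdvd_expn.
  have : p %| 2 * q.+2 * p ^ b.+1 + (q.+2 * 2 + 1) by rewrite dvdn_add ?dvdn_mull.
  rewrite (_ : _ + _ = 2 * p ^ a.+1 + 3); last by move: Ea; lia.
  rewrite dvdn_addr ?dvdn_mull // => /(pdvd_primeE (isT : prime 3)) p3; subst p.
  by case: (add1_quot_sub1_3_d0 (ltn0Sn b) q_ge2 Ea Ec).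
(* p divides q + 1, hence also q (p^b + 1) + 1 = p^a + 2, and so p = 2. *)
have Ec' : p ^ c = q.+2 * p ^ d.+1 + q.+3 by rewrite -Ec; ring.
have pq1 := pdvd_expn_addr c_gt0 Ec' (dvdn_mull _ (pdvd_expn (ltn0Sn d))).
have : p %| q.+2 * p ^ b.+1 + q.+3 by rewrite dvdn_add ?dvdn_mull.
rewrite (_ : _ + _ = p ^ a.+1 + 2); last by move: Ea; lia.
rewrite dvdn_addr // => /(pdvd_primeE (isT : prime 2)) p2; subst p.
left; split=> //; right.
case: b {ok pb} Ea => [|b] Ea; first by case: (add1_quot_sub1_2_b1 (ltn0Sn d) q_ge2 Ea Ec) => -> -> ->.
by case: (add1_quot_sub1_2_b2 (isT : 1 < b.+2) (ltn0Sn d) q_ge2 Ea Ec).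
Qed.

Lemma double_expn_add1_eq_expn c d : 2 * p ^ d + 1 = p ^ c -> p = 3 /\ d = 0 /\ c = 1.
Proof.
move=> E; have pc : p %| p ^ c.
  apply: pdvd_expn; apply: (gt0_of_expn_gt1 (p := p)).
  by rewrite -E; have := pexpn_gt0 p_gt1 d; lia.
case: d E pc => [|d] E pc.
  move: pc; rewrite -E expn0 => /(pdvd_primeE (isT : prime 3)) p3; subst p.
  by do 2!split=> //; apply: (expnI p_gt1); rewrite -E.
have : p %| 2 * p ^ d.+1 := dvdn_mull 2 (pdvd_expn (ltn0Sn d)).
by move/(ndvd_add1 p_gt1); rewrite E pc.
Qed.

Lemma double_expn_add3_eq_expn c d : 2 * p ^ d + 3 = p ^ c ->
  (p = 5 /\ d = 0 /\ c = 1) \/ (p = 3 /\ d = 1 /\ c = 2).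
Proof.
move=> E; have c_gt0 : 0 < c.
  by apply: (gt0_of_expn_gt1 (p := p)); rewrite -E; lia.
case: d E => [|d] E.
  have := pdvd_expn (p := p) c_gt0.
  rewrite -E expn0 => /(pdvd_primeE (isT : prime 5)) p5; subst p.
  by left; do 2!split=> //; apply: (expnI p_gt1); rewrite -E.
have := pdvd_expn_addr c_gt0 (esym E) (dvdn_mull 2 (pdvd_expn (ltn0Sn d))).
move/(pdvd_primeE (isT : prime 3)) => p3; subst p; right; split=> //.
case: d E => [|d] E; first by split=> //; apply: (expnI p_gt1); rewrite -E.
have E' : 3 ^ 1 * (2 * 3 ^ d.+1 + 1) = 3 ^ c by rewrite -E (expnS 3 d.+1); ring.
have [_] := pfactor_mul_eq_expn p_gt1 E' (ndvd_add1 p_gt1 (dvdn_mull 2 (pdvd_expn (ltn0Sn _)))).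
by have := pexpn_gt0 p_gt1 d.+1; lia.
Qed.

Lemma mul_expn_add1_eq_expn_add1_le a c d : a <= d -> (p = 2 -> 0 < a) ->
  (p ^ a + 1) * (p ^ d + 1) = p ^ c + 1 ->
  (p = 3 /\ (a, c, d) = (0, 1, 0)) \/ (p = 2 /\ (a, c, d) = (1, 3, 1)).
Proof.
move=> le_ad a_ok E.
have {}E : p ^ a * p ^ d + p ^ a + p ^ d = p ^ c.
  by apply/eqP; rewrite -(eqn_add2r 1) -E; apply/eqP; ring.
case: a le_ad a_ok E => [|a] le_ad _ E.
  have E' : 2 * p ^ d + 1 = p ^ c by rewrite -E expn0; ring.
  by have [-> [-> ->]] := double_expn_add1_eq_expn E'; left.
case: (ltnP a.+1 d) => [lt_ad | le_da].
  (* The cofactor of p^(a+1) in p^c would be p^d + p^(d-a-1) + 1 > 1, prime to p. *)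
  have split_d : p ^ d = p ^ a.+1 * p ^ (d - a.+1) by rewrite -expnD subnKC // ltnW.
  have E' : p ^ a.+1 * (p ^ d + p ^ (d - a.+1) + 1) = p ^ c by rewrite -E split_d; ring.
  have pdiv : p %| p ^ d + p ^ (d - a.+1) by apply: dvdn_add; apply: pdvd_expn; lia.
  have [_] := pfactor_mul_eq_expn p_gt1 E' (ndvd_add1 p_gt1 pdiv).
  by have := pexpn_gt0 p_gt1 d; lia.
have eq_d : d = a.+1 by apply/eqP; rewrite eqn_leq le_da.
subst d; have E' : p ^ a.+1 * (p ^ a.+1 + 2) = p ^ c by rewrite -E; ring.
have [p2 | p_ndvd] := boolP (p %| p ^ a.+1 + 2); last first.
  by have [_] := pfactor_mul_eq_expn p_gt1 E' p_ndvd; lia.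
move: p2; rewrite dvdn_addr ?pdvd_expn // => /(pdvd_primeE (isT : prime 2)) p2; subst p.
case: a {le_ad le_da} E E' => [|a] E E'.
  by right; split=> //; have -> : c = 3 by apply: (expnI p_gt1); rewrite -E.
have E'' : 2 ^ a.+3 * (2 ^ a.+1 + 1) = 2 ^ c by rewrite -E' !expnS; ring.
have [_] := pfactor_mul_eq_expn p_gt1 E'' (ndvd_add1 p_gt1 (pdvd_expn (ltn0Sn _))).
by have := pexpn_gt0 p_gt1 a.+1; lia.
Qed.

Lemma mul_expn_add1_eq_expn_add1 a c d : (p = 2 -> [/\ 0 < a, 0 < c & 0 < d]) ->
  (p ^ a + 1) * (p ^ d + 1) = p ^ c + 1 ->
  (p = 3 /\ (a, c, d) = (0, 1, 0)) \/ (p = 2 /\ (a, c, d) = (1, 3, 1)).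
Proof.
move=> ok E; have a_ok : p = 2 -> 0 < a by case/ok.
have d_ok : p = 2 -> 0 < d by case/ok.
case: (leqP a d) => [le_ad | /ltnW le_da]; first exact: mul_expn_add1_eq_expn_add1_le.
rewrite mulnC in E.
by case: (mul_expn_add1_eq_expn_add1_le le_da d_ok E) => -[-> [-> -> ->]]; auto.
Qed.

Lemma mul_expn_add1_eq_expn_sub1_le a c d : a <= d -> (p = 2 -> 0 < a) ->
  (p ^ a + 1) * (p ^ d + 1) + 1 = p ^ c ->
  [\/ p = 5 /\ (a, c, d) = (0, 1, 0), p = 3 /\ (a, c, d) = (0, 2, 1)
    | p = 2 /\ (a, c, d) = (1, 4, 2)].
Proof.
move=> le_ad a_ok E.
case: a le_ad a_ok E => [|a] le_ad _ E.
  have E' : 2 * p ^ d + 3 = p ^ c by rewrite -E expn0; ring.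
  by case: (double_expn_add3_eq_expn E') => -[-> [-> ->]]; [apply: Or31 | apply: Or32].
case: d le_ad E => [|d] // le_ad E.
have c_gt0 : 0 < c.
  by apply: (gt0_of_expn_gt1 (p := p)); rewrite -E addn1 ltnS muln_gt0 !addn1.
have Ec : p ^ c = p ^ a.+1 * p ^ d.+1 + p ^ a.+1 + p ^ d.+1 + 2 by rewrite -E; ring.
have pdiv : p %| p ^ a.+1 * p ^ d.+1 + p ^ a.+1 + p ^ d.+1.
  by apply/dvdnP; exists (p ^ a * p ^ d.+1 + p ^ a + p ^ d); rewrite !expnS; ring.
have /(pdvd_primeE (isT : prime 2)) p2 := pdvd_expn_addr c_gt0 Ec pdiv; subst p.
case: a le_ad E {Ec pdiv} => [|a] le_ad E.
  case: d {le_ad} E => [|[|d]] E.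
  - have E' : 2 ^ 1 * 5 = 2 ^ c by rewrite -E.
    by case: (pfactor_mul_eq_expn p_gt1 E' isT).
  - by apply: Or33; have -> : c = 4 by apply: (expnI p_gt1); rewrite -E.
  - have E' : 2 ^ 2 * (3 * 2 ^ d.+1 + 1) = 2 ^ c by rewrite -E !expnS; ring.
    have even : 2 %| 3 * 2 ^ d.+1 := dvdn_mull 3 (pdvd_expn (ltn0Sn _)).
    have [_] := pfactor_mul_eq_expn p_gt1 E' (ndvd_add1 p_gt1 even).
    by have := pexpn_gt0 p_gt1 d.+1; lia.
case: d le_ad E => [|d] // le_ad E.
have E' : 2 ^ 1 * (2 * 2 ^ a.+1 * 2 ^ d.+1 + 2 ^ a.+1 + 2 ^ d.+1 + 1) = 2 ^ c.
  by rewrite -E !expnS; ring.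
have even : 2 %| 2 * 2 ^ a.+1 * 2 ^ d.+1 + 2 ^ a.+1 + 2 ^ d.+1.
  by apply/dvdnP; exists (2 ^ a.+1 * 2 ^ d.+1 + 2 ^ a + 2 ^ d); rewrite !expnS; ring.
have [_] := pfactor_mul_eq_expn p_gt1 E' (ndvd_add1 p_gt1 even).
by have := pexpn_gt0 p_gt1 a.+1; lia.
Qed.

Lemma mul_expn_add1_eq_expn_sub1 a c d : (p = 2 -> [/\ 0 < a, 0 < c & 0 < d]) ->
  (p ^ a + 1) * (p ^ d + 1) + 1 = p ^ c ->
  (p = 5 /\ (a, c, d) = (0, 1, 0)) \/
  (p = 3 /\ ((a, c, d) = (0, 2, 1) \/ (a, c, d) = (1, 2, 0))) \/
  (p = 2 /\ ((a, c, d) = (1, 4, 2) \/ (a, c, d) = (2, 4, 1))).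
Proof.
move=> ok E; have a_ok : p = 2 -> 0 < a by case/ok.
have d_ok : p = 2 -> 0 < d by case/ok.
case: (leqP a d) => [le_ad | /ltnW le_da].
  by case: (mul_expn_add1_eq_expn_sub1_le le_ad a_ok E) => -[-> [-> -> ->]]; auto 6.
rewrite mulnC in E.
by case: (mul_expn_add1_eq_expn_sub1_le le_da d_ok E) => -[-> [-> -> ->]]; auto 6.
Qed.

End PrimeExpn.

Lemma coprime_expn_ndvd p x m : prime p -> ~~ (p %| x) -> coprime x (p ^ m).
Proof. by move=> p_prime px; rewrite coprimeXr // coprime_sym prime_coprime. Qed.

Lemma exps_ok4P p a b c d : exps_ok p [:: a; b; c; d] ->
  p = 2 -> [/\ 0 < a, 0 < b, 0 < c & 0 < d].
Proof. by move=> ok /ok /=; rewrite andbT => /and4P. Qed.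

Lemma exps_ok3P p a c d : exps_ok p [:: a; c; d] -> p = 2 -> [/\ 0 < a, 0 < c & 0 < d].
Proof. by move=> ok /ok /=; rewrite andbT => /and3P. Qed.

Local Open Scope ring_scope.

Lemma pwE p e : pw p e = (p ^ e)%N%:R.
Proof. by rewrite /pw natrX. Qed.

Lemma pw_add1 p e : pw p e + 1 = (p ^ e + 1)%N%:R.
Proof. by rewrite pwE natrD. Qed.

Lemma pw_sub1 p e : (0 < p)%N -> pw p e - 1 = (p ^ e - 1)%N%:R.
Proof. by move=> p_gt0; rewrite pwE natrB // expn_gt0 p_gt0. Qed.

Lemma eq_ratio_nat (A B C D : nat) : (0 < B)%N -> (0 < D)%N ->
  A%:R / B%:R = C%:R / D%:R :> rat -> (A * D = C * B)%N.
Proof.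
by move=> B_gt0 D_gt0 /eqP; rewrite eqr_div ?pnatr_eq0 -?lt0n // -!natrM eqr_nat => /eqP.
Qed.

Lemma eq_nat_ratio (A C D : nat) : (0 < D)%N -> A%:R = C%:R / D%:R :> rat -> (A * D = C)%N.
Proof.
by move=> D_gt0 E; rewrite -[C]muln1; apply: (@eq_ratio_nat A 1 C D) => //; rewrite mulr1n divr1.
Qed.

Lemma posint_ratio_quotient p m (A B : nat) : prime p -> ~~ (p %| B)%N -> (0 < B)%N ->
  posint ((p ^ m * A)%N%:R / B%:R) -> exists2 q, (0 < q)%N & A = (q * B)%N.
Proof.
move=> p_prime pB B_gt0 [k [k_gt0 /esym E]].
have {}E : (p ^ m * A = k * B)%N by rewrite (eq_nat_ratio B_gt0 E).
have dvd_BA : (B %| A)%N.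
  by rewrite -(Gauss_dvdr _ (coprime_expn_ndvd m p_prime pB)) E dvdn_mull.
have A_gt0 : (0 < A)%N by nia.
by exists (A %/ B)%N; rewrite ?divnK // divn_gt0 // dvdn_leq.
Qed.

Section RatioForms.
Variable p : nat.
Hypothesis p_prime : prime p.
Let p_gt1 : (1 < p)%N := prime_gt1 p_prime.
Let p_gt0 : (0 < p)%N := prime_gt0 p_prime.
Let add1_gt0 e : (0 < p ^ e + 1)%N := ltn_addl _ (isT : (0 < 1)%N).

Lemma pw_ratio_add1_add1_inj m n a b c d : exps_ok p [:: a; b; c; d] ->
  pw p m * (pw p a + 1) / (pw p b + 1) = pw p n * (pw p c + 1) / (pw p d + 1) ->
  m = n /\ ((a = b /\ c = d) \/ (a = c /\ b = d)).
Proof.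
move=> /(exps_ok_ndvd p_prime)/and5P[pa pb pc pd _]; rewrite !pw_add1 !pwE -!natrM.
move/(eq_ratio_nat (add1_gt0 b) (add1_gt0 d)); rewrite -!mulnA => E.
have [-> E'] := pfactor_mul_inj p_gt1 E (ndvd_mul p_prime pa pd) (ndvd_mul p_prime pc pb).
by split=> //; exact: (mul_expn_add1_inj p_gt1 E').
Qed.

Lemma pw_ratio_sub1_add1_inj m n a b c d : exps_ok p [:: a; b; c; d] ->
  let x := pw p m * (pw p a - 1) / (pw p b + 1) in
  x = pw p n * (pw p c - 1) / (pw p d + 1) -> posint x -> [/\ m = n, a = c & b = d].
Proof.
move=> /(exps_ok_ndvd p_prime)/and5P[_ pb _ pd _].
rewrite /= !pw_add1 !pw_sub1 // !pwE -!natrM.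
move=> /(eq_ratio_nat (add1_gt0 b) (add1_gt0 d)) E.
case/(posint_ratio_quotient p_prime pb (add1_gt0 b)) => q q_gt0 Eq.
have a_gt0 : (0 < a)%N by rewrite -(expn_sub1_gt0 p_gt1) Eq muln_gt0 q_gt0 add1_gt0.
have pq : ~~ (p %| q)%N.
  by apply: contra (ndvd_expn_sub1 p_gt1 a_gt0) => pq; rewrite Eq dvdn_mulr.
have {}E : (p ^ m * (q * (p ^ d + 1)) = p ^ n * (p ^ c - 1))%N.
  by apply/eqP; rewrite -(eqn_pmul2r (add1_gt0 b)) -E Eq; apply/eqP; ring.
have c_gt0 : (0 < c)%N.
  have : (0 < p ^ n * (p ^ c - 1))%N by rewrite -E !muln_gt0 pexpn_gt0 // q_gt0 add1_gt0.
  by rewrite muln_gt0 expn_sub1_gt0 // => /andP[].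
have [-> Ec] := pfactor_mul_inj p_gt1 E
  (ndvd_mul p_prime pq pd) (ndvd_expn_sub1 p_gt1 c_gt0).
have Ea' : (q * (p ^ b + 1) + 1 = p ^ a)%N by rewrite -Eq subnK ?expn_gt0 ?p_gt0.
have Ec' : (q * (p ^ d + 1) + 1 = p ^ c)%N by rewrite Ec subnK ?expn_gt0 ?p_gt0.
by have [-> ->] := sub1_quot_add1_inj p_prime a_gt0 Ea' Ec'.
Qed.

Lemma pw_ratio_add1_eq_sub1 m n a b c d : exps_ok p [:: a; b; c; d] ->
  let x := pw p m * (pw p a + 1) / (pw p b + 1) in
  x = pw p n * (pw p c - 1) / (pw p d + 1) -> posint x ->
  m = n /\
  ((p = 2%N /\ ((a = b /\ c = 2%N /\ d = 1%N) \/ (a, b, c, d) = (3, 1, 4, 2)%N)) \/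
   (p = 3%N /\ ((a = b /\ c = 1%N /\ d = 0%N) \/ (a, b, c, d) = (1, 0, 2, 1)%N))).
Proof.
move=> ok_l; have /and5P[pa pb pc pd _] := exps_ok_ndvd p_prime ok_l.
have ok := exps_ok4P ok_l; rewrite /= !pw_add1 !pw_sub1 // !pwE -!natrM.
move=> /(eq_ratio_nat (add1_gt0 b) (add1_gt0 d)) E.
case/(posint_ratio_quotient p_prime pb (add1_gt0 b)) => q q_gt0 Eq.
have pq : ~~ (p %| q)%N.
  by apply: contra pa => pq; rewrite Eq dvdn_mulr.
have {}E : (p ^ m * (q * (p ^ d + 1)) = p ^ n * (p ^ c - 1))%N.
  by apply/eqP; rewrite -(eqn_pmul2r (add1_gt0 b)) -E Eq; apply/eqP; ring.
have c_gt0 : (0 < c)%N.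
  have : (0 < p ^ n * (p ^ c - 1))%N by rewrite -E !muln_gt0 pexpn_gt0 // q_gt0 add1_gt0.
  by rewrite muln_gt0 expn_sub1_gt0 // => /andP[].
have [-> Ec] := pfactor_mul_inj p_gt1 E
  (ndvd_mul p_prime pq pd) (ndvd_expn_sub1 p_gt1 c_gt0).
have Ec' : (q * (p ^ d + 1) + 1 = p ^ c)%N by rewrite Ec subnK ?expn_gt0 ?p_gt0.
by split=> //; exact: (add1_quot_sub1 p_prime ok (esym Eq) Ec').
Qed.

Lemma pw_add1_eq_ratio_add1 m n a c d : exps_ok p [:: a; c; d] ->
  pw p m * (pw p a + 1) = pw p n * (pw p c + 1) / (pw p d + 1) ->
  m = n /\ ((p = 3%N /\ (a, c, d) = (0, 1, 0)%N) \/ (p = 2%N /\ (a, c, d) = (1, 3, 1)%N)).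
Proof.
move=> ok_l; have /and4P[pa pc pd _] := exps_ok_ndvd p_prime ok_l.
have ok := exps_ok3P ok_l; rewrite !pw_add1 !pwE -!natrM.
move/(eq_nat_ratio (add1_gt0 d)); rewrite -mulnA => E.
have [-> E'] := pfactor_mul_inj p_gt1 E
  (ndvd_mul p_prime pa pd)
  pc.
by split=> //; exact: (mul_expn_add1_eq_expn_add1 p_prime ok E').
Qed.

Lemma pw_add1_eq_ratio_sub1 m n a c d : exps_ok p [:: a; c; d] ->
  pw p m * (pw p a + 1) = pw p n * (pw p c - 1) / (pw p d + 1) ->
  m = n /\
  ((p = 5%N /\ (a, c, d) = (0, 1, 0)%N) \/
   (p = 3%N /\ ((a, c, d) = (0, 2, 1)%N \/ (a, c, d) = (1, 2, 0)%N)) \/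
   (p = 2%N /\ ((a, c, d) = (1, 4, 2)%N \/ (a, c, d) = (2, 4, 1)%N))).
Proof.
move=> ok_l; have /and4P[pa pc pd _] := exps_ok_ndvd p_prime ok_l.
have ok := exps_ok3P ok_l; rewrite !pw_add1 !pw_sub1 // !pwE -!natrM.
move/(eq_nat_ratio (add1_gt0 d)); rewrite -mulnA => E.
have c_gt0 : (0 < c)%N.
  have : (0 < p ^ n * (p ^ c - 1))%N by rewrite -E !muln_gt0 pexpn_gt0 // !add1_gt0.
  by rewrite muln_gt0 expn_sub1_gt0 // => /andP[].
have [-> E'] := pfactor_mul_inj p_gt1 E
  (ndvd_mul p_prime pa pd)
  (ndvd_expn_sub1 p_gt1 c_gt0).
split=> //; apply: (mul_expn_add1_eq_expn_sub1 p_prime ok).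
by rewrite E' subnK ?expn_gt0 ?p_gt0.
Qed.

End RatioForms.

Theorem mainTheorem11 (p : nat) (hp : prime p) :
  (* (1) *)
  (forall m n a b c d : nat, exps_ok p [:: a; b; c; d] ->
     let x := pw p m * (pw p a + 1) / (pw p b + 1) in
     x = pw p n * (pw p c + 1) / (pw p d + 1) -> posint x ->
     m = n /\ ((a = b /\ c = d) \/ (a = c /\ b = d))) /\
  (* (2) *)
  (forall m n a b c d : nat, exps_ok p [:: a; b; c; d] ->
     let x := pw p m * (pw p a - 1) / (pw p b + 1) in
     x = pw p n * (pw p c - 1) / (pw p d + 1) -> posint x ->
     [/\ m = n, a = c & b = d]) /\
  (* (3) *)
  (forall m n a b c d : nat, exps_ok p [:: a; b; c; d] ->
     let x := pw p m * (pw p a + 1) / (pw p b + 1) in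
     x = pw p n * (pw p c - 1) / (pw p d + 1) -> posint x ->
     m = n /\
     ((p = 2%N /\ ((a = b /\ c = 2%N /\ d = 1%N) \/ (a, b, c, d) = (3, 1, 4, 2)%N)) \/
      (p = 3%N /\ ((a = b /\ c = 1%N /\ d = 0%N) \/ (a, b, c, d) = (1, 0, 2, 1)%N)))) /\
  (* (4) *)
  (forall m n a c d : nat, exps_ok p [:: a; c; d] ->
     let x := pw p m * (pw p a + 1) in
     x = pw p n * (pw p c + 1) / (pw p d + 1) -> posint x ->
     m = n /\
     ((p = 3%N /\ (a, c, d) = (0, 1, 0)%N) \/ (p = 2%N /\ (a, c, d) = (1, 3, 1)%N))) /\
  (* (5) *)
  (forall m n a c d : nat, exps_ok p [:: a; c; d] ->
     let x := pw p m * (pw p a + 1) in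
     x = pw p n * (pw p c - 1) / (pw p d + 1) -> posint x ->
     m = n /\
     ((p = 5%N /\ (a, c, d) = (0, 1, 0)%N) \/
      (p = 3%N /\ ((a, c, d) = (0, 2, 1)%N \/ (a, c, d) = (1, 2, 0)%N)) \/
      (p = 2%N /\ ((a, c, d) = (1, 4, 2)%N \/ (a, c, d) = (2, 4, 1)%N)))).
Proof.
split; [|split; [|split; [|split]]].
- by move=> m n a b c d ok x E _; apply: pw_ratio_add1_add1_inj ok E.
- exact: pw_ratio_sub1_add1_inj.
- exact: pw_ratio_add1_eq_sub1.
- by move=> m n a c d ok x E _; apply: pw_add1_eq_ratio_add1 ok E.
- by move=> m n a c d ok x E _; apply: pw_add1_eq_ratio_sub1 ok E.
Qed.
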